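(* For every integer $n\ge3$, $$2^{n-3}=\sum_{(a_1,\dots,a_k)\in C(n)}(F_{a_1}-1)(F_{a_2}-1)\cdots(F_{a_k}-1),$$ where the only nonzero terms come from compositions all of whose parts exceed $2$.
   Context: $C(n)$ is the set of all compositions $(a_1,\dots,a_k)$ of $n$ (sequences of positive integers with sum $n$, any number of parts). Fibonacci numbers: $F_0=0$, $F_1=1$, $F_n=F_{n-1}+F_{n-2}$. *)

From mathcomp Require Import all_boot all_algebra.
Set Implicit Arguments. Unset Strict Implicit. Unset Printing Implicit Defensive.
Import GRing.Theory.

Fixpoint fib (n : nat) : nat :=
  match n with
  | 0 => 0
  | 1 => 1
  | (m.+1 as k).+1 => fib k + fib m
  end.

Definition is_composition (n : nat) (s : seq nat) : bool :=
  all (fun a => 0 < a) s && (sumn s == n).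

(* Enumeration of all compositions of n: first part a in 1..n, then a
   composition of n - a.  Defined via fuel to make termination structural. *)
Fixpoint comps_aux (fuel n : nat) : seq (seq nat) :=
  match fuel with
  | 0 => if n == 0 then [:: [::]] else [::]
  | f.+1 =>
      if n == 0 then [:: [::]]
      else flatten [seq [seq a :: s | s <- comps_aux f (n - a)] | a <- iota 1 n]
  end.

Definition compositions (n : nat) : seq (seq nat) := comps_aux n n.

Lemma compositions_small :
  compositions 3 = [:: [:: 1; 1; 1]; [:: 1; 2]; [:: 2; 1]; [:: 3]].
Proof. by []. Qed.

From mathcomp Require Import all_boot all_algebra zify ring.
Import GRing.Theory.

(* For an arbitrary weight w : nat -> R (R any ring), the weighted count
   W(n) = sum over compositions s of n of prod_{a in s} w a then satisfies
   W(0) = 1 and W(n) = sum_{a=1}^n w a * W(n - a).  When w 1 = w 2 = 0 this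
   gives W(1) = W(2) = 0 and W(k+3) = w(k+3) + sum_{a=1}^k w a * W(k+3-a).
   For w a = F_a - 1 we prove the Fibonacci identity
   (F_{k+3} - 1) + sum_{a=1}^k (F_a - 1) 2^(k-a) = 2^k, and strong induction
   then gives W(n) = 2^(n-3) for n >= 3. *)

Lemma comps_auxSS f n : comps_aux f.+1 n.+1 =
  flatten [seq [seq a :: s | s <- comps_aux f (n.+1 - a)] | a <- iota 1 n.+1].
Proof. by []. Qed.

Lemma comps_aux_fuel f g n : n <= f -> n <= g -> comps_aux f n = comps_aux g n.
Proof.
elim: f g n => [|f IH] g n.
  by rewrite leqn0 => /eqP -> _; case: g.
case: n => [|n] Hf Hg; first by case: g Hg.
case: g Hg => [//|g] Hg; rewrite !comps_auxSS.
congr flatten; apply/eq_in_map => a; rewrite mem_iota => /andP [Ha _].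
by congr map; apply: IH; lia.
Qed.

Lemma compositions_rec n : 0 < n -> compositions n =
  flatten [seq [seq a :: s | s <- compositions (n - a)] | a <- iota 1 n].
Proof.
case: n => [//|n] _; rewrite /compositions comps_auxSS.
congr flatten; apply/eq_in_map => a; rewrite mem_iota => /andP [Ha _].
by congr map; apply: comps_aux_fuel; lia.
Qed.

Lemma compositions0 : compositions 0 = [:: [::]].
Proof. by []. Qed.

Lemma mem_compositions n s : (s \in compositions n) = is_composition n s.
Proof.
elim/ltn_ind: n s => n IH s.
have [->|Hn] := posnP n.
  rewrite compositions0 inE /is_composition; case: s => [//|[|b] t] //=.
  by rewrite addSn andbF.
rewrite compositions_rec //; apply/flatten_mapP/idP.
  move=> [a]; rewrite mem_iota => /andP [Ha1 Ha2] /mapP [t Ht ->].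
  rewrite IH in Ht; last by lia.
  move: Ht; rewrite /is_composition /= => /andP [-> /eqP ->].
  by rewrite Ha1 /= subnKC //; lia.
case: s => [|b t]; first by rewrite /is_composition /=; case: n Hn {IH}.
rewrite /is_composition /= => /andP [/andP [Hb Ht] /eqP Hs].
exists b; first by rewrite mem_iota; lia.
apply/mapP; exists t => //.
by rewrite IH /is_composition ?Ht -?Hs ?addKn ?eqxx //; lia.
Qed.

Lemma uniq_flatten_cons (T : eqType) (r : seq T) (L : T -> seq (seq T)) :
  uniq r -> (forall a, a \in r -> uniq (L a)) ->
  uniq (flatten [seq [seq a :: s | s <- L a] | a <- r]).
Proof.
elim: r => [//|a r IH] /= /andP [Ha Ur] UL.
rewrite cat_uniq IH ?andbT //; last by move=> b Hb; apply: UL; rewrite inE Hb orbT.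
apply/andP; split.
  by rewrite map_inj_uniq ?UL ?inE ?eqxx // => x y [].
apply/hasPn => s /flatten_mapP [b Hb /mapP [t _ ->]].
by apply/mapP => [[u _ [Eb _]]]; move: Ha; rewrite -Eb Hb.
Qed.

Lemma compositions_uniq n : uniq (compositions n).
Proof.
elim/ltn_ind: n => n IH.
have [->//|Hn] := posnP n.
rewrite compositions_rec //; apply: uniq_flatten_cons; first exact: iota_uniq.
by move=> a; rewrite mem_iota => /andP [Ha _]; apply: IH; lia.
Qed.

Local Open Scope ring_scope.

Section WeightedCount.
Variables (R : pzRingType) (w : nat -> R).

Definition weighted_count (n : nat) : R :=
  \sum_(s <- compositions n) \prod_(a <- s) w a.

Lemma weighted_count0 : weighted_count 0 = 1.
Proof. by rewrite /weighted_count compositions0 big_seq1 big_nil. Qed.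

(* Conditioning on the first part a of the composition. *)
Lemma weighted_count_rec n : (0 < n)%N ->
  weighted_count n = \sum_(1 <= a < n.+1) w a * weighted_count (n - a).
Proof.
move=> Hn; rewrite /weighted_count compositions_rec // big_flatten big_map.
rewrite /index_iota subn1 /=; apply: eq_bigr => a _.
by rewrite big_map mulr_sumr; apply: eq_bigr => s _; rewrite big_cons.
Qed.

Hypotheses (w1 : w 1 = 0) (w2 : w 2 = 0).

Lemma weighted_count1 : weighted_count 1 = 0.
Proof. by rewrite weighted_count_rec // big_nat1 w1 mul0r. Qed.

Lemma weighted_count2 : weighted_count 2 = 0.
Proof.
by rewrite weighted_count_rec // big_nat_recr //= big_nat1 w1 w2 !mul0r addr0.
Qed.

(* Since compositions of 1 and 2 weigh nothing, the first part a is either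
   all of n = k+3 or leaves a remainder of at least 3. *)
Lemma weighted_count_rec3 k : weighted_count k.+3 =
  w k.+3 + \sum_(1 <= a < k.+1) w a * weighted_count (k.+3 - a).
Proof.
rewrite weighted_count_rec //; do 3 rewrite big_nat_recr //=.
have -> : (k.+3 - k.+3 = 0)%N by lia.
have -> : (k.+3 - k.+2 = 1)%N by lia.
have -> : (k.+3 - k.+1 = 2)%N by lia.
by rewrite weighted_count0 weighted_count1 weighted_count2 !mulr0 !addr0 mulr1 addrC.
Qed.

End WeightedCount.

Arguments weighted_count {R} w n.

Definition fib_pred (a : nat) : int := (fib a)%:Z - 1.

Lemma fib_pred1 : fib_pred 1 = 0. Proof. by []. Qed.
Lemma fib_pred2 : fib_pred 2 = 0. Proof. by []. Qed.

Lemma fib_predSS k : fib_pred k.+2 = fib_pred k.+1 + fib_pred k + 1.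
Proof. by rewrite /fib_pred /= PoszD; ring. Qed.

(* (F_{k+3} - 1) + sum_{a=1}^k (F_a - 1) 2^(k-a) = 2^k: the geometric tail
   doubles at each step while the recurrence absorbs the new term. *)
Lemma fib_pred_geometric k :
  fib_pred k.+3 + \sum_(1 <= a < k.+1) fib_pred a * 2 ^+ (k - a) = 2 ^+ k.
Proof.
elim: k => [|k IH]; first by rewrite big_geq.
have -> : \sum_(1 <= a < k.+2) fib_pred a * 2 ^+ (k.+1 - a) =
          2 * \sum_(1 <= a < k.+1) fib_pred a * 2 ^+ (k - a) + fib_pred k.+1.
  rewrite big_nat_recr //= subnn expr0 mulr1 mulr_sumr; congr (_ + _).
  by apply: eq_big_nat => a /andP [_ Ha]; rewrite subSn // exprS mulrCA.
rewrite exprS -IH (fib_predSS k.+2) (fib_predSS k.+1); ring.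
Qed.

Lemma weighted_count_fib_pred n : (3 <= n)%N ->
  weighted_count fib_pred n = 2 ^+ (n - 3).
Proof.
elim/ltn_ind: n => n IH Hn.
have [k En] : exists k, n = k.+3 by exists (n - 3)%N; lia.
subst n.
have -> : (k.+3 - 3 = k)%N by lia.
rewrite weighted_count_rec3 ?fib_pred1 ?fib_pred2 // -fib_pred_geometric.
congr (_ + _); apply: eq_big_nat => a /andP [Ha1 Ha2].
by rewrite IH; [congr (_ * 2 ^+ _) | |]; lia.
Qed.

Theorem mainTheorem17 (n : nat) : (3 <= n)%N ->
  uniq (compositions n) /\
  (forall s : seq nat, (s \in compositions n) = is_composition n s) /\
  (2 ^+ (n - 3) : int) =
    \sum_(s <- compositions n) \prod_(a <- s) ((fib a)%:Z - 1).
Proof.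
move=> Hn; split; first exact: compositions_uniq.
split; first exact: mem_compositions.
by rewrite -weighted_count_fib_pred.
Qed.
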